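(* Let $f:[0,\infty)\to[0,\infty)$ be continuously differentiable with $f>0$ on $[t_0,\infty)$ for some $t_0\ge0$ and $f\in C^2([t_0,\infty))$, let $g=\log f$ on $[t_0,\infty)$, and assume condition (H1) of the context. Then for every $M>0$, $$\lim_{t\to\infty}\sup_{-M\le y\le M}\left|\frac{g'\big(t+\frac{y}{g'(t)}\big)}{g'(t)}-1\right|=0.$$
   Context: Condition (H1): (i) $g'(t)>0$ and $g''(t)>0$ for all $t\ge t_0$, and there is a pair $(q,p)$ with either $q=1$ and $p\in(0,\infty]$, or $q\in(1,\infty)$ and $p\in(0,\infty)$, such that $\lim_{t\to\infty}\frac{g'(t)^2}{g(t)g''(t)}=q$ and $\lim_{t\to\infty}\frac{tg'(t)}{g(t)}=p$; (ii) if $q=1$, then $tg'(t)/g(t)$ is nondecreasing on $[t_0,\infty)$ and there exist $k\in\mathbb{N}$ and $\hat g\in C^2([t_0,\infty))$ with $f=\exp_k\circ\hat g$ and $\hat g'/\hat g$ nonincreasing on $[t_0,\infty)$ ($\exp_1=\exp$, $\exp_k=\exp_{k-1}\circ\exp$). *)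

From Stdlib Require Import Reals.
From Coquelicot Require Import Coquelicot.
Open Scope R_scope.

Definition expk (k : nat) (x : R) : R := Nat.iter k exp x.

(* h is C^2 on [t0, oo) (derivatives taken two-sided at every t >= t0). *)
Definition C2_on (h : R -> R) (t0 : R) : Prop :=
  forall t, t0 <= t ->
    ex_derive h t /\ ex_derive (Derive h) t /\ continuous (Derive (Derive h)) t.

Definition H1 (f : R -> R) (t0 : R) : Prop :=
  let g  := fun t => ln (f t) in
  let g1 := Derive g in
  let g2 := Derive g1 in
  (forall t, t0 <= t -> 0 < g1 t /\ 0 < g2 t) /\
  exists (q : R) (p : Rbar),
    is_lim (fun t => g1 t ^ 2 / (g t * g2 t)) p_infty q /\
    is_lim (fun t => t * g1 t / g t) p_infty p /\
    ((q = 1 /\ Rbar_lt 0 p) \/ (1 < q /\ exists pr : R, p = Finite pr /\ 0 < pr)) /\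
    (q = 1 ->
      (forall s t, t0 <= s -> s <= t -> s * g1 s / g s <= t * g1 t / g t) /\
      exists k : nat, (1 <= k)%nat /\
      exists gh : R -> R, C2_on gh t0 /\
        (forall t, t0 <= t -> f t = expk k (gh t)) /\
        (forall s t, t0 <= s -> s <= t -> Derive gh t / gh t <= Derive gh s / gh s)).

(* Since g1 is positive and increasing, g grows at
   least linearly, and the ratio g1^2 / (g g2), which tends to q >= 1, is
   eventually bounded below; hence (1 / g1)' = - g2 / g1^2 tends to 0.  For
   s = t + y / g1 t the mean value theorem then gives
   |g1 t / g1 s - 1| <= sup |(1 / g1)'| * |y|, uniformly small for |y| <= M.
   Only (H1)(i) and q > 0 are needed. *)

From Stdlib Require Import Reals Lra.
From Coquelicot Require Import Coquelicot.
Open Scope R_scope.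

Lemma derive_ge_lower_bound (h dh : R -> R) (c s t : R) :
  s <= t ->
  (forall x, s <= x <= t -> is_derive h x (dh x) /\ c <= dh x) ->
  h s + c * (t - s) <= h t.
Proof.
  intros Hst Hh.
  destruct (Rle_lt_or_eq_dec s t Hst) as [Hlt | ->]; [| lra].
  destruct (MVT_cor3 h dh s t) as [x [Hsx [Hxt ->]]]; [lra | |].
  - intros x Hsx Hxt. apply is_derive_Reals, Hh. lra.
  - assert (c <= dh x) by (apply Hh; lra). nra.
Qed.

Lemma Rabs_sub1_le_of_inv (u e : R) :
  0 < u -> Rabs (/ u - 1) <= e -> e <= 1 / 2 -> Rabs (u - 1) <= 2 * e.
Proof.
  intros Hu Hinv He.
  assert (Hu2 : u <= 2).
  { apply Rabs_le_between in Hinv.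
    assert (u * / u = 1) by (field; lra). nra. }
  replace (u - 1) with (- u * (/ u - 1)) by (field; lra).
  rewrite Rabs_mult, Rabs_Ropp, (Rabs_pos_eq u) by lra.
  assert (0 <= Rabs (/ u - 1)) by apply Rabs_pos. nra.
Qed.

Lemma filterlim_Lub_Rbar_0 {T : Type} (F : (T -> Prop) -> Prop) {FF : Filter F}
    (E : T -> R -> Prop) :
  (forall eps : posreal,
      F (fun t => (exists z, E t z) /\ forall z, E t z -> Rabs z <= eps)) ->
  filterlim (fun t => Lub_Rbar (E t)) F (Rbar_locally (Finite 0)).
Proof.
  intros Hsmall P [eps HP].
  unfold filtermap. refine (filter_imp _ _ _ (Hsmall (pos_div_2 eps))).
  intros t [[z Hz] Hbound].
  destruct (Lub_Rbar_correct (E t)) as [Hub Hleast].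
  assert (Hle : Rbar_le (Lub_Rbar (E t)) (eps / 2)).
  { apply Hleast. intros w Hw. exact (proj2 (proj1 (Rabs_le_between _ _) (Hbound w Hw))). }
  assert (Hge : Rbar_le z (Lub_Rbar (E t))) by (apply Hub; exact Hz).
  assert (Hz_lb := proj1 (proj1 (Rabs_le_between _ _) (Hbound z Hz))).
  destruct (Lub_Rbar (E t)) as [l | |]; simpl in Hle, Hge; try contradiction.
  apply HP. change (Rabs (l - 0) < eps).
  apply Rabs_def1; simpl in *; destruct eps; simpl in *; lra.
Qed.

Lemma is_derive_ln_comp (f : R -> R) (x : R) :
  ex_derive f x -> 0 < f x -> is_derive (fun s => ln (f s)) x (Derive f x / f x).
Proof.
  intros Hf Hpos. auto_derive; [tauto |].
  change (fun y => f y) with f. field. lra.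
Qed.

Lemma ex_derive_Derive_ln_comp (f : R -> R) (t0 x : R) :
  (forall y, t0 <= y -> ex_derive f y /\ 0 < f y) ->
  t0 < x -> ex_derive (Derive f) x ->
  ex_derive (Derive (fun s => ln (f s))) x.
Proof.
  intros Hf Hx Hf'.
  apply ex_derive_ext_loc with (fun s => Derive f s / f s).
  - apply (filter_imp (fun y => t0 < y)); [| exact (open_gt t0 x Hx)].
    intros y Hy. destruct (Hf y) as [Hdy Hpy]; [lra |].
    symmetry. exact (is_derive_unique _ _ _ (is_derive_ln_comp f y Hdy Hpy)).
  - destruct (Hf x) as [Hdx Hpx]; [lra |].
    apply ex_derive_div; [exact Hf' | exact Hdx | lra].
Qed.

Section UniformShift.

Variables (g g1 g2 : R -> R) (a : R).
Hypothesis g_deriv : forall x, a <= x -> is_derive g x (g1 x).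
Hypothesis g1_deriv : forall x, a <= x -> is_derive g1 x (g2 x).
Hypothesis g1_pos : forall x, a <= x -> 0 < g1 x.
Hypothesis g2_pos : forall x, a <= x -> 0 < g2 x.
Hypothesis ratio_eventually_gt :
  exists rho, 0 < rho /\
    Rbar_locally p_infty (fun x => rho < g1 x ^ 2 / (g x * g2 x)).

Lemma g1_ge (x : R) : a <= x -> g1 a <= g1 x.
Proof.
  intros Hx.
  enough (g1 a + 0 * (x - a) <= g1 x) by lra.
  apply (derive_ge_lower_bound g1 g2); [lra |].
  intros u Hu. split; [apply g1_deriv | left; apply g2_pos]; lra.
Qed.

Lemma g_ge_affine (x : R) : a <= x -> g a + g1 a * (x - a) <= g x.
Proof.
  intros Hx. apply (derive_ge_lower_bound g g1); [lra |].
  intros u Hu. split; [apply g_deriv | apply g1_ge]; lra.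
Qed.

Lemma g_eventually_gt (K : R) : Rbar_locally p_infty (fun x => K < g x).
Proof.
  assert (Ha := g1_pos a (Rle_refl a)).
  exists (Rmax a (a + (K - g a) / g1 a)). intros x Hx.
  assert (Hxa : a < x) by (eapply Rle_lt_trans; [apply Rmax_l | exact Hx]).
  assert (HxK : (K - g a) / g1 a < x - a)
    by (assert (H := Rle_lt_trans _ _ _ (Rmax_r _ _) Hx); lra).
  assert (Hmul : (K - g a) / g1 a * g1 a = K - g a) by (field; lra).
  assert (Hg := g_ge_affine x (Rlt_le _ _ Hxa)). nra.
Qed.

Lemma g2_div_g1_sq_eventually_le (delta : R) :
  0 < delta -> Rbar_locally p_infty (fun x => g2 x / g1 x ^ 2 <= delta).
Proof.
  intros Hdelta. destruct ratio_eventually_gt as [rho [Hrho Hratio]].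
  assert (Hrd : 0 < rho * delta) by nra.
  apply (filter_imp (fun x => (a <= x /\ rho < g1 x ^ 2 / (g x * g2 x))
                              /\ / (rho * delta) < g x)).
  - intros x [[Hx Hr] Hg].
    assert (H1 := g1_pos x Hx). assert (H2 := g2_pos x Hx).
    assert (Hgpos : 0 < g x) by (assert (0 < / (rho * delta)) by (apply Rinv_0_lt_compat; lra); lra).
    assert (Hsq : rho * (g x * g2 x) < g1 x ^ 2).
    { assert (Hm : g1 x ^ 2 / (g x * g2 x) * (g x * g2 x) = g1 x ^ 2) by (field; lra).
      assert (0 < g x * g2 x) by nra. nra. }
    assert (Hgd : 1 < rho * delta * g x).
    { assert (Hm : / (rho * delta) * (rho * delta) = 1) by (field; lra). nra. }
    apply Rle_div_l; [nra |]. nra.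
  - apply filter_and; [apply filter_and; [exists a; intros; lra | exact Hratio] |].
    apply g_eventually_gt.
Qed.

Lemma g1_shift_close (t y delta : R) :
  (forall u, Rabs (u - t) <= Rabs (y / g1 t) -> a <= u /\ g2 u / g1 u ^ 2 <= delta) ->
  a <= t -> delta * Rabs y <= 1 / 2 ->
  Rabs (g1 (t + y / g1 t) / g1 t - 1) <= 2 * (delta * Rabs y).
Proof.
  intros Hball Ht Hsmall.
  set (s := t + y / g1 t).
  assert (Hgt := g1_pos t Ht).
  assert (Hs : a <= s) by (apply (Hball s); unfold s; right; f_equal; ring).
  assert (Hgs := g1_pos s Hs).
  assert (Hmvt : Rabs (/ g1 s - / g1 t) <= delta * Rabs (s - t)).
  { apply (bounded_variation (fun u => / g1 u) (fun u => - g2 u / g1 u ^ 2) delta t s).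
    intros u Hu. replace (s - t) with (y / g1 t) in Hu by (unfold s; ring).
    destruct (Hball u Hu) as [Hua Hdelta].
    split; [apply is_derive_inv; [apply g1_deriv | apply Rgt_not_eq, g1_pos]; exact Hua |].
    rewrite Rabs_left1; [unfold Rdiv in *; lra |].
    assert (0 < g2 u / g1 u ^ 2)
      by (apply Rdiv_lt_0_compat; [apply g2_pos | apply pow_lt, g1_pos]; exact Hua).
    unfold Rdiv in *; lra. }
  apply Rabs_sub1_le_of_inv; [apply Rdiv_lt_0_compat; lra | | lra].
  replace (/ (g1 s / g1 t) - 1) with ((/ g1 s - / g1 t) * g1 t) by (field; lra).
  replace (s - t) with (y * / g1 t) in Hmvt by (unfold s, Rdiv; ring).
  rewrite Rabs_mult, (Rabs_pos_eq (g1 t)) by lra.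
  rewrite Rabs_mult, (Rabs_pos_eq (/ g1 t)) in Hmvt by (left; apply Rinv_0_lt_compat; lra).
  assert (Hc : / g1 t * g1 t = 1) by (field; lra).
  apply Rmult_le_compat_r with (r := g1 t) in Hmvt; [| lra].
  replace (delta * (Rabs y * / g1 t) * g1 t) with (delta * Rabs y) in Hmvt
    by (field; lra).
  exact Hmvt.
Qed.

Lemma g1_shift_ratio_uniform (M : R) (eps : posreal) :
  0 < M ->
  Rbar_locally p_infty (fun t =>
    forall y, -M <= y <= M -> Rabs (g1 (t + y / g1 t) / g1 t - 1) <= eps).
Proof.
  intros HM.
  set (m := Rmin (1 / 2) eps).
  assert (Hm : 0 < m) by (apply Rmin_glb_lt; [lra | apply cond_pos]).
  set (delta := m / (2 * M)).
  assert (Hdelta : 0 < delta) by (apply Rdiv_lt_0_compat; lra).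
  assert (HdM : delta * M = m / 2) by (unfold delta; field; lra).
  assert (Ha := g1_pos a (Rle_refl a)).
  assert (Hr : 0 < M / g1 a) by (apply Rdiv_lt_0_compat; lra).
  destruct (g2_div_g1_sq_eventually_le delta Hdelta) as [T HT].
  exists (Rmax T a + M / g1 a). intros t Ht y Hy.
  assert (HTa : T <= Rmax T a /\ a <= Rmax T a) by (split; [apply Rmax_l | apply Rmax_r]).
  assert (Hta : a <= t) by lra.
  assert (Hyabs : Rabs y <= M) by (apply Rabs_le; lra).
  assert (Hstep : Rabs (y / g1 t) <= M / g1 a).
  { unfold Rdiv. rewrite Rabs_mult, (Rabs_pos_eq (/ g1 t))
      by (left; apply Rinv_0_lt_compat, g1_pos; lra).
    apply Rmult_le_compat; [apply Rabs_pos | left; apply Rinv_0_lt_compat, g1_pos; lra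
                           | exact Hyabs |].
    apply Rinv_le_contravar; [lra | apply g1_ge; lra]. }
  assert (Hdy : delta * Rabs y <= m / 2)
    by (rewrite <- HdM; apply Rmult_le_compat_l; lra).
  assert (m <= 1 / 2 /\ m <= eps) by (split; [apply Rmin_l | apply Rmin_r]).
  apply Rle_trans with (2 * (delta * Rabs y)); [| lra].
  apply g1_shift_close; [| exact Hta | lra].
  intros u Hu. apply Rabs_le_between in Hu.
  split; [lra | apply HT; lra].
Qed.

End UniformShift.

Theorem lemma2p5 (f : R -> R) (t0 : R) :
  0 <= t0 ->
  (forall t, 0 <= t -> 0 <= f t) ->
  (forall t, 0 < t -> ex_derive f t /\ continuous (Derive f) t) ->
  (forall t, t0 <= t -> 0 < f t) ->
  C2_on f t0 ->
  H1 f t0 ->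
  forall M : R, 0 < M ->
    filterlim
      (fun t => Lub_Rbar (fun z => exists y, -M <= y <= M /\
          z = Rabs (Derive (fun s => ln (f s)) (t + y / Derive (fun s => ln (f s)) t)
                    / Derive (fun s => ln (f s)) t - 1)))
      (Rbar_locally p_infty) (Rbar_locally (Finite 0)).
Proof.
  intros _ _ _ Hpos HC2 HH M HM.
  destruct HH as [Hsign [q [p [Hratio [_ [Hq _]]]]]].
  assert (Hf : forall y, t0 <= y -> ex_derive f y /\ 0 < f y)
    by (intros y Hy; split; [apply HC2 | apply Hpos]; exact Hy).
  set (g := fun s => ln (f s)) in *.
  assert (Hq_gt : 1 / 2 < q) by (destruct Hq as [[-> _] | [Hq _]]; lra).
  apply (filterlim_Lub_Rbar_0 (Rbar_locally p_infty)). intros eps.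
  (* base point t0 + 1: differentiating Derive g needs a neighbourhood inside [t0, oo) *)
  refine (filter_imp _ _ _
           (g1_shift_ratio_uniform g (Derive g) (Derive (Derive g)) (t0 + 1)
              _ _ _ _ _ M eps HM)).
  - intros t Ht. split; [eexists; exists 0; split; [lra | reflexivity] |].
    intros z [y [Hy ->]]. rewrite Rabs_Rabsolu. exact (Ht y Hy).
  - intros x Hx. destruct (Hf x) as [Hdx Hpx]; [lra |].
    apply Derive_correct. eexists. exact (is_derive_ln_comp f x Hdx Hpx).
  - intros x Hx. apply Derive_correct, (ex_derive_Derive_ln_comp f t0); [exact Hf | lra |].
    apply HC2. lra.
  - intros x Hx. apply Hsign. lra.
  - intros x Hx. apply Hsign. lra.
  - exists (1 / 2). split; [lra |].
    exact (Hratio _ (open_gt _ _ Hq_gt)).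
Qed.
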